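(* Consider iterative self-improvement with binary reward $s(q,a)\in\{0,1\}$, where at each iteration $t$ one samples $n$ questions $q\sim p_0$, generates one answer $a\sim \pi_{\hat\theta_t}(\cdot\mid q)$ per question, keeps the $n_t\le n$ pairs with $s(q,a)=1$, and sets $\hat\theta_{t+1}$ to the maximum-likelihood estimate over a finite model class $\Pi$ on these accepted pairs; $V_{p_0}(\theta):=\mathbb{E}_{q\sim p_0,\,a\sim\pi_\theta(\cdot\mid q)}[s(q,a)]$ denotes the expected reward. Assume there exist $c\in(0,1)$ and $\gamma\ge 0$ such that for any question distribution $p$ and any model $\theta$ in a small neighborhood $\Theta$ of the pretrained initialization, $\Pr_{q\sim p}[\alpha(\theta,q)<c\,V_p(\theta)]\le\gamma$, where $\alpha(\theta,q):=\Pr_{a\sim\pi_\theta(\cdot\mid q)}[s(q,a)=1]$. Define \[ F(x):=1-\gamma-\frac{c_\delta \nu}{c\sqrt{x-c_{\delta'}\nu}}\quad\text{on } x>c_{\delta'}\nu, \] with $\nu:=\sqrt{1/n}$, $c_\delta:=\sqrt{2\log(|\Pi|\,\delta^{-1})}$, $c_{\delta'}:=\sqrt{\log(\delta'^{-1})/2}$ (so that, with probability at least $1-t(\delta+\delta')$, $V_{p_0}(\hat\theta_t)\ge F^{\circ t}(V_{p_0}(\hat\theta_0))$, where $F^{\circ t}$ is the $t$-fold composition of $F$). Let $\nu$ be sufficiently small such that \[ 0<\frac{c_\delta \nu}{c\,(1-\gamma-c_{\delta'}\nu)^{3/2}}<\frac{2}{3\sqrt{3}}. \] Let $\mathcal I(1,\nu)=(x_-(1,\nu),x_+(1,\nu))\subset(c_{\delta'}\nu,\,1-\gamma)$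 be the open interval whose endpoints $x_-(1,\nu)<x_+(1,\nu)$ are the two solutions of the fixed-point equation $F(x)=x$. Then, for any non-negative integer $t$, $F^{\circ(t+1)}(V_{p_0}(\hat\theta_0))>F^{\circ t}(V_{p_0}(\hat\theta_0))$ and $F^{\circ t}(V_{p_0}(\hat\theta_0))\in\mathcal I(1,\nu)$ hold if and only if $V_{p_0}(\hat\theta_0)\in\mathcal I(1,\nu)$. Moreover, $x_-(1,\nu)$ is increasing in $\nu$, $x_+(1,\nu)$ is decreasing in $\nu$, and the interval length $|\mathcal I(1,\nu)|=x_+(1,\nu)-x_-(1,\nu)$ is decreasing in $\nu$ and satisfies \[ |\mathcal I(1,\nu)|\;\ge\;(1-\gamma-c_{\delta'}\nu)-\frac{3\sqrt3}{2}\cdot\frac{c_\delta \nu}{c\sqrt{\,1-\gamma-c_{\delta'}\nu\,}}. \]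
   Context: Setting of iterative self-improvement for mathematical reasoning with binary verifiable reward; the previous result (Corollary 4.4) gives the high-probability lower bound $V_{p_0}(\hat\theta_{t+1})\ge F(V_{p_0}(\hat\theta_t))$ and its iterated version. *)

From Stdlib Require Import Reals.
Open Scope R_scope.

Definition c_delta (Pi_card : nat) (delta : R) : R :=
  sqrt (2 * ln (INR Pi_card / delta)).

Definition c_delta' (delta' : R) : R := sqrt (ln (/ delta') / 2).

(* F(x) := 1 - gamma - cd * nu / (c * sqrt(x - cd' * nu)), meaningful on x > cd' * nu
   (outside that domain the value is the Stdlib junk value). *)
Definition F (gamma c cd cd' nu x : R) : R :=
  1 - gamma - cd * nu / (c * sqrt (x - cd' * nu)).

Definition Fiter (gamma c cd cd' nu : R) (t : nat) (x : R) : R :=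
  Nat.iter t (F gamma c cd cd' nu) x.

Definition nu_small (gamma c cd cd' nu : R) : Prop :=
  0 < nu /\
  let A := 1 - gamma - cd' * nu in
  0 < cd * nu / (c * (A * sqrt A)) < 2 / (3 * sqrt 3).

(* Write x = cd' nu + s^2 with s > 0, A = 1 - gamma - cd' nu and K = cd nu / c.  Then
   F x - x = (cubic A s - K) / s with cubic A s = s (A - s^2).  The cubic vanishes at 0 and
   sqrt A and equals 2 A sqrt A / (3 sqrt 3) at sqrt (A/3), so the smallness condition on nu
   yields two roots 0 < s1 < s2 of cubic A s = K, and by Vieta
   cubic A s - K = (s - s1) (s2 - s) (s + s1 + s2).  Hence F lies above the diagonal exactly
   on I = (cd' nu + s1^2, cd' nu + s2^2); since F is increasing it maps I into I and the
   complement of I into itself, which gives the dynamics.  F decreases pointwise in nu,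
   which pushes both fixed points inwards.  The length bound adds 2 s1^2 sqrt A <= sqrt 3 K
   and (A - s2^2) sqrt A <= sqrt 3 K, which hold on the respective sides of sqrt (A/3). *)

From Stdlib Require Import Reals Lra Psatz Classical ClassicalEpsilon.
Open Scope R_scope.

Definition cubic (A s : R) : R := s * (A - s * s).

Lemma cubic_max A : 0 < A ->
  cubic A (sqrt A / sqrt 3) = 2 / (3 * sqrt 3) * (A * sqrt A).
Proof.
  intros HA. unfold cubic.
  assert (Hr : 0 < sqrt 3) by (apply sqrt_lt_R0; lra).
  assert (Ha2 : sqrt A * sqrt A = A) by (apply sqrt_sqrt; lra).
  assert (Hr2 : sqrt 3 * sqrt 3 = 3) by (apply sqrt_sqrt; lra).
  set (a := sqrt A) in *. set (r := sqrt 3) in *.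
  rewrite <- Ha2.
  replace (a / r * (a * a - a / r * (a / r))) with (a * a * a * (r * r - 1) / (r * r * r))
    by (field; lra).
  rewrite Hr2. field. lra.
Qed.

Lemma cubic_two_roots A K : 0 < A -> 0 < K -> K < 2 / (3 * sqrt 3) * (A * sqrt A) ->
  exists s1 s2, 0 < s1 < s2 /\ cubic A s1 = K /\ cubic A s2 = K.
Proof.
  intros HA HK Hmax.
  set (m := sqrt A / sqrt 3).
  assert (Hm : K < cubic A m) by (unfold m; rewrite cubic_max; lra).
  assert (Ha : 0 < sqrt A) by (apply sqrt_lt_R0; lra).
  assert (Hr : 1 < sqrt 3) by (rewrite <- sqrt_1; apply sqrt_lt_1_alt; lra).
  assert (Hm0 : 0 < m) by (apply Rdiv_lt_0_compat; lra).
  assert (Hma : m < sqrt A).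
  { unfold m. apply (Rmult_lt_reg_r (sqrt 3)); [lra|].
    unfold Rdiv. rewrite Rmult_assoc, Rinv_l by lra. nra. }
  assert (H0 : cubic A 0 = 0) by (unfold cubic; ring).
  assert (Hend : cubic A (sqrt A) = 0) by (unfold cubic; rewrite sqrt_sqrt; lra).
  assert (Hcont : continuity (fun s => cubic A s - K)) by (unfold cubic; reg).
  destruct (IVT_cor _ 0 m Hcont) as [s1 [Hs1 E1]]; [lra | rewrite H0; nra |].
  destruct (IVT_cor _ m (sqrt A) Hcont) as [s2 [Hs2 E2]]; [lra | rewrite Hend; nra |].
  assert (s1 <> 0) by (intros ->; lra).
  assert (s1 <> m) by (intros ->; lra).
  assert (s2 <> m) by (intros ->; lra).
  exists s1, s2. repeat split; lra.
Qed.

Lemma cubic_roots_coef A K s1 s2 : s1 <> s2 -> cubic A s1 = K -> cubic A s2 = K ->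
  A = s1 * s1 + s1 * s2 + s2 * s2 /\ K = s1 * s2 * (s1 + s2).
Proof.
  intros Hne E1 E2.
  assert (HA : A = s1 * s1 + s1 * s2 + s2 * s2).
  { assert (Hf : (s1 - s2) * (A - (s1 * s1 + s1 * s2 + s2 * s2)) = 0).
    { transitivity (cubic A s1 - cubic A s2); [unfold cubic; ring | lra]. }
    destruct (Rmult_integral _ _ Hf); lra. }
  split; [exact HA|]. rewrite <- E1. unfold cubic. rewrite HA. ring.
Qed.

Lemma cubic_sub_factor A K s1 s2 s : s1 <> s2 -> cubic A s1 = K -> cubic A s2 = K ->
  cubic A s - K = (s - s1) * (s2 - s) * (s + s1 + s2).
Proof.
  intros Hne E1 E2. destruct (cubic_roots_coef A K s1 s2 Hne E1 E2) as [-> ->].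
  unfold cubic. ring.
Qed.

Lemma sqrt3_mul s : 0 <= s -> sqrt 3 * s = sqrt (3 * (s * s)).
Proof. intros Hs. rewrite sqrt_mult_alt, sqrt_square by lra. reflexivity. Qed.

Lemma cubic_lower_root_bound A s : 0 <= s -> 3 * (s * s) <= A ->
  2 * (s * s) * sqrt A <= sqrt 3 * cubic A s.
Proof.
  intros Hs HsA. unfold cubic.
  assert (Ha2 : sqrt A * sqrt A = A) by (apply sqrt_sqrt; nra).
  assert (Hr : 0 < sqrt 3) by (apply sqrt_lt_R0; lra).
  assert (Hr2 : sqrt 3 * sqrt 3 = 3) by (apply sqrt_sqrt; lra).
  assert (Hle : sqrt 3 * s <= sqrt A) by (rewrite sqrt3_mul by lra; apply sqrt_le_1_alt; lra).
  assert (0 <= s * (sqrt A - sqrt 3 * s) * (sqrt 3 * sqrt A + s))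
    by (apply Rmult_le_pos; [apply Rmult_le_pos|]; nra).
  assert (E : sqrt 3 * (s * (A - s * s)) - 2 * (s * s) * sqrt A
              = s * (sqrt A - sqrt 3 * s) * (sqrt 3 * sqrt A + s)
                + sqrt 3 * s * (A - sqrt A * sqrt A) + sqrt A * s * s * (sqrt 3 * sqrt 3 - 3))
    by ring.
  rewrite Ha2, Hr2 in E. lra.
Qed.

Lemma cubic_upper_root_bound A s : 0 <= s -> s * s <= A <= 3 * (s * s) ->
  (A - s * s) * sqrt A <= sqrt 3 * cubic A s.
Proof.
  intros Hs HsA. unfold cubic.
  assert (Hle : sqrt A <= sqrt 3 * s) by (rewrite sqrt3_mul by lra; apply sqrt_le_1_alt; lra).
  assert (0 <= (A - s * s) * (sqrt 3 * s - sqrt A)) by (apply Rmult_le_pos; lra).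
  lra.
Qed.

Lemma cubic_roots_gap A K s1 s2 : 0 < s1 < s2 -> cubic A s1 = K -> cubic A s2 = K ->
  A - 3 * sqrt 3 / 2 * (K / sqrt A) <= s2 * s2 - s1 * s1.
Proof.
  intros Hs E1 E2.
  destruct (cubic_roots_coef A K s1 s2 ltac:(lra) E1 E2) as [HA HK].
  assert (Ha : 0 < sqrt A) by (apply sqrt_lt_R0; nra).
  assert (B1 := cubic_lower_root_bound A s1 ltac:(lra) ltac:(nra)).
  assert (B2 := cubic_upper_root_bound A s2 ltac:(lra) ltac:(nra)).
  rewrite E1 in B1. rewrite E2 in B2.
  apply (Rmult_le_reg_r (sqrt A)); [exact Ha|].
  replace ((A - 3 * sqrt 3 / 2 * (K / sqrt A)) * sqrt A)
    with (A * sqrt A - 3 / 2 * (sqrt 3 * K)) by (field; lra).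
  lra.
Qed.

Lemma iter_invariant {T : Type} (f : T -> T) (P : T -> Prop) :
  (forall x, P x -> P (f x)) -> forall t x, P x -> P (Nat.iter t f x).
Proof. intros Hf t x Hx. induction t as [|t IH]; simpl; auto. Qed.

Lemma iter_increasing_in_iff (f : R -> R) (I : R -> Prop) :
  (forall x, I x -> x < f x /\ I (f x)) -> (forall x, ~ I x -> ~ I (f x)) ->
  forall x t, (Nat.iter (S t) f x > Nat.iter t f x /\ I (Nat.iter t f x)) <-> I x.
Proof.
  intros Hin Hout x t. split.
  - intros [_ Ht]. apply NNPP. intros Hx.
    exact (iter_invariant f (fun y => ~ I y) Hout t x Hx Ht).
  - intros Hx.
    assert (Ht := iter_invariant f I (fun y Hy => proj2 (Hin y Hy)) t x Hx).
    simpl. destruct (Hin _ Ht). split; [lra | exact Ht].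
Qed.

Section FixedPoints.

Variables gamma c cd cd' : R.
Hypotheses (c_pos : 0 < c) (cd'_ge0 : 0 <= cd').

Local Notation Fn nu := (F gamma c cd cd' nu).
Local Notation A nu := (1 - gamma - cd' * nu).
Local Notation K nu := (cd * nu / c).

Lemma F_below nu x : x <= cd' * nu -> Fn nu x = 1 - gamma.
Proof.
  intros Hx. unfold F. rewrite (sqrt_neg_0 (x - cd' * nu)) by lra.
  rewrite Rmult_0_r, Rdiv_0_r. ring.
Qed.

Lemma F_sub_id nu x : cd' * nu < x ->
  Fn nu x - x = (cubic (A nu) (sqrt (x - cd' * nu)) - K nu) / sqrt (x - cd' * nu).
Proof.
  intros Hx. unfold F, cubic.
  assert (Hs : 0 < sqrt (x - cd' * nu)) by (apply sqrt_lt_R0; lra).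
  assert (Es : sqrt (x - cd' * nu) * sqrt (x - cd' * nu) = x - cd' * nu)
    by (apply sqrt_sqrt; lra).
  set (s := sqrt (x - cd' * nu)) in *. rewrite Es. field. lra.
Qed.

Lemma F_lt_top nu x : 0 < cd * nu -> cd' * nu < x -> Fn nu x < 1 - gamma.
Proof.
  intros Hcd Hx. unfold F.
  assert (0 < sqrt (x - cd' * nu)) by (apply sqrt_lt_R0; lra).
  assert (0 < cd * nu / (c * sqrt (x - cd' * nu))) by (apply Rdiv_lt_0_compat; nra).
  lra.
Qed.

Lemma F_increasing nu x y : 0 < cd * nu -> cd' * nu < x -> x < y -> Fn nu x < Fn nu y.
Proof.
  intros Hcd Hx Hxy. unfold F.
  assert (Hsx : 0 < sqrt (x - cd' * nu)) by (apply sqrt_lt_R0; lra).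
  assert (Hsxy : sqrt (x - cd' * nu) < sqrt (y - cd' * nu)) by (apply sqrt_lt_1_alt; lra).
  assert (cd * nu / (c * sqrt (y - cd' * nu)) < cd * nu / (c * sqrt (x - cd' * nu))).
  { unfold Rdiv. apply Rmult_lt_compat_l; [exact Hcd|].
    apply Rinv_lt_contravar; [|apply Rmult_lt_compat_l; lra].
    apply Rmult_lt_0_compat; apply Rmult_lt_0_compat; lra. }
  lra.
Qed.

Lemma F_decreasing_in_nu nu1 nu2 x : 0 < cd -> 0 < nu1 < nu2 -> cd' * nu2 < x ->
  Fn nu2 x < Fn nu1 x.
Proof.
  intros Hcd Hnu Hx. unfold F.
  assert (Hs2 : 0 < sqrt (x - cd' * nu2)) by (apply sqrt_lt_R0; lra).
  assert (Hs12 : sqrt (x - cd' * nu2) <= sqrt (x - cd' * nu1)) by (apply sqrt_le_1_alt; nra).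
  assert (cd * nu1 / (c * sqrt (x - cd' * nu1)) <= cd * nu1 / (c * sqrt (x - cd' * nu2))).
  { unfold Rdiv. apply Rmult_le_compat_l; [nra|].
    apply Rinv_le_contravar; [apply Rmult_lt_0_compat; lra | apply Rmult_le_compat_l; lra]. }
  assert (cd * nu1 / (c * sqrt (x - cd' * nu2)) < cd * nu2 / (c * sqrt (x - cd' * nu2))).
  { unfold Rdiv. apply Rmult_lt_compat_r; [|nra].
    apply Rinv_0_lt_compat. nra. }
  lra.
Qed.

Lemma nu_small_pos nu : nu_small gamma c cd cd' nu -> 0 < nu /\ 0 < A nu /\ 0 < cd.
Proof.
  intros [Hnu [Hpos _]].
  assert (HA : 0 < A nu).
  { destruct (Rle_lt_dec (A nu) 0) as [HA|HA]; [|exact HA].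
    rewrite (sqrt_neg_0 _ HA), !Rmult_0_r, Rdiv_0_r in Hpos. lra. }
  assert (HD : 0 < c * (A nu * sqrt (A nu)))
    by (apply Rmult_lt_0_compat; [lra | apply Rmult_lt_0_compat, sqrt_lt_R0; lra]).
  set (D := c * (A nu * sqrt (A nu))) in *.
  assert (0 < cd * nu).
  { replace (cd * nu) with (cd * nu / D * D) by (field; lra).
    apply Rmult_lt_0_compat; lra. }
  repeat split; nra.
Qed.

Lemma nu_small_lt_cubic_max nu : nu_small gamma c cd cd' nu ->
  K nu < 2 / (3 * sqrt 3) * (A nu * sqrt (A nu)).
Proof.
  intros Hsmall. destruct (nu_small_pos nu Hsmall) as (_ & HA & _).
  destruct Hsmall as [_ [_ Hlt]].
  assert (HD : 0 < A nu * sqrt (A nu)) by (apply Rmult_lt_0_compat, sqrt_lt_R0; lra).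
  set (D := A nu * sqrt (A nu)) in *.
  replace (K nu) with (cd * nu / (c * D) * D) by (field; lra).
  apply Rmult_lt_compat_r; assumption.
Qed.

Definition fixed_points nu : R * R :=
  epsilon (inhabits (0, 0))
    (fun p => cd' * nu < fst p < snd p /\ Fn nu (fst p) = fst p /\ Fn nu (snd p) = snd p).

Local Notation xm nu := (fst (fixed_points nu)).
Local Notation xp nu := (snd (fixed_points nu)).

Lemma fixed_point_cubic nu x : cd' * nu < x -> Fn nu x = x ->
  cubic (A nu) (sqrt (x - cd' * nu)) = K nu.
Proof.
  intros Hx Hfix. assert (E := F_sub_id nu x Hx).
  assert (Hs : 0 < sqrt (x - cd' * nu)) by (apply sqrt_lt_R0; lra).
  rewrite Hfix, Rminus_diag in E.
  set (s := sqrt (x - cd' * nu)) in *.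
  assert (cubic (A nu) s - K nu = 0); [|lra].
  replace (cubic (A nu) s - K nu) with ((cubic (A nu) s - K nu) / s * s) by (field; lra).
  rewrite <- E. ring.
Qed.

Lemma fixed_points_spec nu : nu_small gamma c cd cd' nu ->
  cd' * nu < xm nu < xp nu /\ Fn nu (xm nu) = xm nu /\ Fn nu (xp nu) = xp nu.
Proof.
  intros Hsmall. destruct (nu_small_pos nu Hsmall) as (Hnu & HA & Hcd).
  apply (epsilon_spec (inhabits (0, 0)) (fun p =>
    cd' * nu < fst p < snd p /\ Fn nu (fst p) = fst p /\ Fn nu (snd p) = snd p)).
  destruct (cubic_two_roots (A nu) (K nu) HA ltac:(apply Rdiv_lt_0_compat; nra)
                             (nu_small_lt_cubic_max nu Hsmall))
    as (s1 & s2 & Hs & E1 & E2).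
  assert (Hfix : forall s, 0 < s -> cubic (A nu) s = K nu ->
                   Fn nu (cd' * nu + s * s) = cd' * nu + s * s).
  { intros s Hs0 Es. assert (Hb : cd' * nu < cd' * nu + s * s) by nra.
    assert (E := F_sub_id nu _ Hb).
    replace (cd' * nu + s * s - cd' * nu) with (s * s) in E by ring.
    rewrite sqrt_square, Es, Rminus_diag, Rdiv_0_l in E by lra. lra. }
  exists (cd' * nu + s1 * s1, cd' * nu + s2 * s2). simpl.
  repeat split; try nra; apply Hfix; lra.
Qed.

Lemma F_sub_id_factor nu x : nu_small gamma c cd cd' nu -> cd' * nu < x ->
  exists w, 0 < w /\ Fn nu x - x = w * ((x - xm nu) * (xp nu - x)).
Proof.
  intros Hsmall Hx.
  destruct (fixed_points_spec nu Hsmall) as ((Hm & Hmp) & Fm & Fp).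
  assert (E1 := fixed_point_cubic nu _ Hm Fm).
  assert (E2 := fixed_point_cubic nu (xp nu) ltac:(lra) Fp).
  assert (Hs1s2 : sqrt (xm nu - cd' * nu) < sqrt (xp nu - cd' * nu))
    by (apply sqrt_lt_1_alt; lra).
  assert (Hs : 0 < sqrt (x - cd' * nu)) by (apply sqrt_lt_R0; lra).
  assert (Hs1 : 0 < sqrt (xm nu - cd' * nu)) by (apply sqrt_lt_R0; lra).
  assert (Es : sqrt (x - cd' * nu) * sqrt (x - cd' * nu) = x - cd' * nu)
    by (apply sqrt_sqrt; lra).
  assert (Es1 : sqrt (xm nu - cd' * nu) * sqrt (xm nu - cd' * nu) = xm nu - cd' * nu)
    by (apply sqrt_sqrt; lra).
  assert (Es2 : sqrt (xp nu - cd' * nu) * sqrt (xp nu - cd' * nu) = xp nu - cd' * nu)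
    by (apply sqrt_sqrt; lra).
  rewrite F_sub_id by exact Hx.
  rewrite (cubic_sub_factor _ _ _ _ _ (Rlt_not_eq _ _ Hs1s2) E1 E2).
  set (s := sqrt (x - cd' * nu)) in *.
  set (s1 := sqrt (xm nu - cd' * nu)) in *.
  set (s2 := sqrt (xp nu - cd' * nu)) in *.
  exists ((s + s1 + s2) / (s * (s + s1) * (s2 + s))). split.
  - apply Rdiv_lt_0_compat; [lra|]. repeat apply Rmult_lt_0_compat; lra.
  - replace (x - xm nu) with ((s - s1) * (s + s1)) by lra.
    replace (xp nu - x) with ((s2 - s) * (s2 + s)) by lra.
    field. repeat split; lra.
Qed.

Lemma F_fixed_iff nu x : nu_small gamma c cd cd' nu -> cd' * nu < x ->
  (Fn nu x = x <-> x = xm nu \/ x = xp nu).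
Proof.
  intros Hsmall Hx. destruct (F_sub_id_factor nu x Hsmall Hx) as (w & Hw & E).
  split.
  - intros Hfix. rewrite Hfix, Rminus_diag in E.
    destruct (Rmult_integral _ _ (eq_sym E)) as [|E']; [lra|].
    destruct (Rmult_integral _ _ E'); [left | right]; lra.
  - intros [-> | ->]; rewrite ?Rminus_diag, ?Rmult_0_l, ?Rmult_0_r in E; lra.
Qed.

Lemma lt_F_iff nu x : nu_small gamma c cd cd' nu -> cd' * nu < x ->
  (x < Fn nu x <-> xm nu < x < xp nu).
Proof.
  intros Hsmall Hx. destruct (F_sub_id_factor nu x Hsmall Hx) as (w & Hw & E).
  destruct (fixed_points_spec nu Hsmall) as ((Hm & Hmp) & _ & _).
  split.
  - intros Hlt. assert (Hprod : 0 < (x - xm nu) * (xp nu - x)).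
    { apply (Rmult_lt_reg_l w); [exact Hw|]. lra. }
    split; nra.
  - intros Hin. assert (0 < w * ((x - xm nu) * (xp nu - x))).
    { apply Rmult_lt_0_compat; [exact Hw|]. apply Rmult_lt_0_compat; lra. }
    lra.
Qed.

Lemma fixed_points_lt_top nu : nu_small gamma c cd cd' nu -> xp nu < 1 - gamma.
Proof.
  intros Hsmall.
  destruct (nu_small_pos nu Hsmall) as (Hnu & _ & Hcd).
  destruct (fixed_points_spec nu Hsmall) as ((Hm & Hmp) & _ & Fp).
  rewrite <- Fp. apply F_lt_top; nra.
Qed.

Lemma F_maps_interval nu x : nu_small gamma c cd cd' nu -> xm nu < x < xp nu ->
  x < Fn nu x /\ xm nu < Fn nu x < xp nu.
Proof.
  intros Hsmall Hin.
  destruct (nu_small_pos nu Hsmall) as (Hnu & _ & Hcd).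
  destruct (fixed_points_spec nu Hsmall) as ((Hm & Hmp) & Fm & Fp).
  assert (Hlt : x < Fn nu x) by (apply (lt_F_iff nu x Hsmall); lra).
  assert (Fn nu x < Fn nu (xp nu)) by (apply F_increasing; nra).
  lra.
Qed.

Lemma F_maps_interval_compl nu x : nu_small gamma c cd cd' nu -> ~ (xm nu < x < xp nu) ->
  ~ (xm nu < Fn nu x < xp nu).
Proof.
  intros Hsmall Hout.
  destruct (nu_small_pos nu Hsmall) as (Hnu & _ & Hcd).
  destruct (fixed_points_spec nu Hsmall) as ((Hm & Hmp) & Fm & Fp).
  assert (Hmono : forall y z, cd' * nu < y -> y <= z -> Fn nu y <= Fn nu z).
  { intros y z Hy [Hyz | ->]; [left; apply F_increasing; nra | right; reflexivity]. }
  destruct (Rle_lt_dec x (cd' * nu)) as [Hb | Hb].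
  - rewrite F_below by exact Hb.
    assert (xp nu < 1 - gamma) by exact (fixed_points_lt_top nu Hsmall). lra.
  - destruct (Rle_lt_dec x (xm nu)) as [Hxm | Hxm].
    + assert (Fn nu x <= Fn nu (xm nu)) by (apply Hmono; lra). lra.
    + assert (Fn nu (xp nu) <= Fn nu x) by (apply Hmono; lra). lra.
Qed.

Lemma fixed_points_monotone nu1 nu2 :
  nu_small gamma c cd cd' nu1 -> nu_small gamma c cd cd' nu2 -> nu1 < nu2 ->
  xm nu1 < xm nu2 /\ xp nu2 < xp nu1.
Proof.
  intros Hsmall1 Hsmall2 Hlt.
  destruct (nu_small_pos nu1 Hsmall1) as (Hnu1 & _ & Hcd).
  destruct (fixed_points_spec nu2 Hsmall2) as ((Hm & Hmp) & Fm & Fp).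
  (* [F] decreases in [nu], so a fixed point of [F nu2] lies below the graph of [F nu1] *)
  assert (Hinside : forall x, cd' * nu2 < x -> Fn nu2 x = x -> xm nu1 < x < xp nu1).
  { intros x Hx Hfix. apply (lt_F_iff nu1 x Hsmall1); [nra|].
    rewrite <- Hfix at 1. apply F_decreasing_in_nu; lra. }
  split; [apply (Hinside (xm nu2)) | apply (Hinside (xp nu2))]; lra.
Qed.

Lemma fixed_points_gap nu : nu_small gamma c cd cd' nu ->
  xp nu - xm nu >= A nu - 3 * sqrt 3 / 2 * (cd * nu / (c * sqrt (A nu))).
Proof.
  intros Hsmall.
  destruct (nu_small_pos nu Hsmall) as (_ & HA & _).
  destruct (fixed_points_spec nu Hsmall) as ((Hm & Hmp) & Fm & Fp).
  assert (Hs1 : 0 < sqrt (xm nu - cd' * nu)) by (apply sqrt_lt_R0; lra).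
  assert (Hs12 : sqrt (xm nu - cd' * nu) < sqrt (xp nu - cd' * nu))
    by (apply sqrt_lt_1_alt; lra).
  assert (Hgap := cubic_roots_gap _ _ _ _ (conj Hs1 Hs12)
                    (fixed_point_cubic nu _ Hm Fm) (fixed_point_cubic nu (xp nu) ltac:(lra) Fp)).
  rewrite !sqrt_sqrt in Hgap by lra.
  assert (Ha : 0 < sqrt (A nu)) by (apply sqrt_lt_R0; lra).
  replace (cd * nu / (c * sqrt (A nu))) with (K nu / sqrt (A nu)) by (field; lra).
  lra.
Qed.

End FixedPoints.

Theorem proposition4p5 (Pi_card : nat) (delta delta' gamma c : R)
  (hPi : (1 <= Pi_card)%nat)
  (hdelta : 0 < delta < 1) (hdelta' : 0 < delta' < 1)
  (hgamma : 0 <= gamma) (hc : 0 < c < 1) :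
  let cd := c_delta Pi_card delta in
  let cd' := c_delta' delta' in
  exists xm xp : R -> R,
    (* for every admissible nu: the fixed-point equation F(x) = x on the domain
       x > cd' nu has exactly the two solutions xm nu < xp nu, and
       I(1,nu) = (xm nu, xp nu) lies in (cd' nu, 1 - gamma) *)
    (forall nu, nu_small gamma c cd cd' nu ->
       cd' * nu < xm nu /\ xm nu < xp nu /\ xp nu < 1 - gamma /\
       (forall x, cd' * nu < x ->
          (F gamma c cd cd' nu x = x <-> (x = xm nu \/ x = xp nu)))) /\
    (* dynamics: for every initial value V0 and every t,
       F^{t+1}(V0) > F^t(V0) /\ F^t(V0) in I(1,nu)  <->  V0 in I(1,nu) *)
    (forall nu, nu_small gamma c cd cd' nu ->
       forall (V0 : R) (t : nat),
         (Fiter gamma c cd cd' nu (S t) V0 > Fiter gamma c cd cd' nu t V0 /\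
          xm nu < Fiter gamma c cd cd' nu t V0 < xp nu)
         <-> xm nu < V0 < xp nu) /\
    (* monotonicity in nu *)
    (forall nu1 nu2, nu_small gamma c cd cd' nu1 -> nu_small gamma c cd cd' nu2 ->
       nu1 < nu2 ->
       xm nu1 < xm nu2 /\ xp nu2 < xp nu1 /\
       xp nu2 - xm nu2 < xp nu1 - xm nu1) /\
    (* lower bound on the interval length *)
    (forall nu, nu_small gamma c cd cd' nu ->
       xp nu - xm nu >=
       (1 - gamma - cd' * nu)
       - (3 * sqrt 3 / 2) * (cd * nu / (c * sqrt (1 - gamma - cd' * nu)))).
Proof.
  intros cd cd'.
  assert (Hc : 0 < c) by lra.
  assert (Hcd' : 0 <= cd') by apply sqrt_pos.
  exists (fun nu => fst (fixed_points gamma c cd cd' nu)),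
         (fun nu => snd (fixed_points gamma c cd cd' nu)).
  split; [|split; [|split]].
  - intros nu Hsmall.
    destruct (fixed_points_spec gamma c cd cd' Hc nu Hsmall) as ((Hm & Hmp) & _ & _).
    refine (conj Hm (conj Hmp (conj (fixed_points_lt_top gamma c cd cd' Hc nu Hsmall) _))).
    intros x Hx. exact (F_fixed_iff gamma c cd cd' Hc nu x Hsmall Hx).
  - intros nu Hsmall.
    apply (iter_increasing_in_iff (F gamma c cd cd' nu)
             (fun x => fst (fixed_points gamma c cd cd' nu) < x
                       < snd (fixed_points gamma c cd cd' nu))); intros x.
    + exact (F_maps_interval gamma c cd cd' Hc nu x Hsmall).
    + exact (F_maps_interval_compl gamma c cd cd' Hc nu x Hsmall).
  - intros nu1 nu2 Hsmall1 Hsmall2 Hlt.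
    destruct (fixed_points_monotone gamma c cd cd' Hc Hcd' nu1 nu2 Hsmall1 Hsmall2 Hlt).
    repeat split; lra.
  - intros nu Hsmall. exact (fixed_points_gap gamma c cd cd' Hc nu Hsmall).
Qed.
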